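(* Let $S=\begin{pmatrix}A&B\\C&D\end{pmatrix}\in\mathrm{Sp}(d,\mathbb R)$. Then $\mathbb R^d=R(B)\oplus A(\ker(B))$.
   Context: $\mathrm{Sp}(d,\mathbb R)$ is the group of real $2d\times 2d$ matrices $S$ with $S^TJS=J$, $J=\begin{pmatrix}0_d&I_d\\-I_d&0_d\end{pmatrix}$, written in $d\times d$ blocks $A,B,C,D$. $R(B)$ is the range and $\ker(B)$ the kernel of $B$; $\oplus$ denotes a (not necessarily orthogonal) direct sum. *)

From HB Require Import structures.
From mathcomp Require Import all_boot all_order all_algebra.
Set Implicit Arguments. Unset Strict Implicit. Unset Printing Implicit Defensive.
Import Order.TTheory GRing.Theory Num.Theory.
Local Open Scope ring_scope.

Definition symJ (R : nzRingType) (d : nat) : 'M[R]_(d + d) :=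
  block_mx 0 1%:M (- 1%:M) 0.

Definition symplectic (R : nzRingType) (d : nat) (S : 'M[R]_(d + d)) : Prop :=
  S^T *m symJ R d *m S = symJ R d.

Definition range_mx (R : nzRingType) (d : nat) (M : 'M[R]_d) (v : 'cV[R]_d) : Prop :=
  exists x : 'cV[R]_d, v = M *m x.
Definition ker_mx (R : nzRingType) (d : nat) (M : 'M[R]_d) (x : 'cV[R]_d) : Prop :=
  M *m x = 0.
Definition image_mx (R : nzRingType) (d : nat) (M : 'M[R]_d) (U : 'cV[R]_d -> Prop)
  (v : 'cV[R]_d) : Prop := exists x, U x /\ v = M *m x.

Definition direct_sum_whole (R : nzRingType) (d : nat) (U V : 'cV[R]_d -> Prop) : Prop :=
  (forall v : 'cV[R]_d, exists u w, U u /\ V w /\ v = u + w) /\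
  (forall v : 'cV[R]_d, U v -> V v -> v = 0).

(* Writing S = [[A, B], [C, D]], the identity S^T J S = J yields
   A^T D - C^T B = 1 and B^T D = D^T B.  If B x = 0 and A x = B y, then
   x = (D^T A - B^T C) x = B^T (D y - C x), so |x|^2 = (B x)^T (D y - C x) = 0.
   Hence A(ker B) meets R(B) trivially and A is injective on ker B, so
   dim R(B) + dim A(ker B) = rank B + (d - rank B) = d. *)
From mathcomp Require Import all_boot all_order all_algebra.
Import Order.TTheory GRing.Theory Num.Theory.
Local Open Scope ring_scope.

Lemma symplectic_blocks {R : nzRingType} {d : nat} (S : 'M[R]_(d + d)) :
  symplectic S ->
  let A := ulsubmx S in let B := ursubmx S in
  let C := dlsubmx S in let D := drsubmx S in
  A^T *m D - C^T *m B = 1%:M /\ B^T *m D = D^T *m B.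
Proof.
move=> + A B C D; rewrite /symplectic /symJ -[S]submxK tr_block_mx !mulmx_block.
move/eq_block_mx => [_ + _]; rewrite !(mulmx0, mul0mx, mulmx1, mulmxN).
rewrite !(add0r, addr0) => AD /eqP BD.
split; first by rewrite addrC -mulNmx; exact: AD.
by apply/eqP; rewrite -subr_eq0 addrC -mulNmx; exact: BD.
Qed.

Lemma rV_dot_self_eq0 {R : realDomainType} {n : nat} (u : 'rV[R]_n) :
  u *m u^T = 0 -> u = 0.
Proof.
move/matrixP/(_ 0 0); rewrite !mxE => usq0.
apply/rowP => i; rewrite mxE; apply/eqP; move: usq0.
under eq_bigr => k _ do rewrite mxE.
move/psumr_eq0P => /(_ (fun k _ => sqr_ge0 (u 0 k)) i isT) /eqP.
by rewrite mulf_eq0 orbb.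
Qed.

Lemma symplectic_kerB_imageA_eq0 {R : realDomainType} {d : nat}
    {A B C D : 'M[R]_d} :
  A^T *m D - C^T *m B = 1%:M -> B^T *m D = D^T *m B ->
  forall u v : 'rV[R]_d, u *m B^T = 0 -> u *m A^T = v *m B^T -> u = 0.
Proof.
move=> symAD symBD u v uB0 uAvB; apply: rV_dot_self_eq0.
have uE : u = (v *m D^T - u *m C^T) *m B.
  by rewrite -[u in LHS]mulmx1 -symAD mulmxBr mulmxBl !mulmxA uAvB -!mulmxA symBD.
by rewrite {1}uE -mulmxA -[B *m _]trmxK trmx_mul trmxK uB0 trmx0 mulmx0.
Qed.

Lemma range_mx_rowE {F : fieldType} {d : nat} (B : 'M[F]_d) (v : 'cV[F]_d) :
  range_mx B v <-> (v^T <= B^T)%MS.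
Proof.
split=> [[x ->] | /submxP[y vB]].
  by rewrite trmx_mul submxMl.
by exists y^T; rewrite -[v]trmxK vB trmx_mul trmxK.
Qed.

Lemma image_ker_mx_rowE {F : fieldType} {d : nat} (A B : 'M[F]_d) (v : 'cV[F]_d) :
  image_mx A (ker_mx B) v <-> (v^T <= kermx B^T *m A^T)%MS.
Proof.
split=> [[x [Bx0 ->]] | /submxP[z vKA]].
  rewrite trmx_mul submxMr //; apply/sub_kermxP.
  by rewrite -trmx_mul Bx0 trmx0.
exists (z *m kermx B^T)^T; split.
  apply: trmx_inj; rewrite /ker_mx trmx_mul trmxK trmx0.
  by apply/sub_kermxP; rewrite submxMl.
by apply: trmx_inj; rewrite trmx_mul trmxK vKA mulmxA.
Qed.

Lemma capmx_kermx_mul_eq0 {F : fieldType} {n : nat} (M N : 'M[F]_n) :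
  (forall u v : 'rV[F]_n, u *m M = 0 -> u *m N = v *m M -> u = 0) ->
  (M :&: kermx M *m N)%MS = 0.
Proof.
move=> kerM_inj; apply/eqP/rowV0P => w.
rewrite sub_capmx => /andP[/submxP[v ->] /submxP[u vM_uKN]].
have uKM0 : u *m kermx M *m M = 0 by apply/sub_kermxP; rewrite submxMl.
by rewrite vM_uKN mulmxA (kerM_inj _ v uKM0) ?mul0mx // -mulmxA -vM_uKN.
Qed.

Lemma mxrank_kermx_mul {F : fieldType} {n : nat} (M N : 'M[F]_n) :
  (forall u : 'rV[F]_n, u *m M = 0 -> u *m N = 0 -> u = 0) ->
  \rank (kermx M *m N) = (n - \rank M)%N.
Proof.
move=> kerM_inj; rewrite -mxrank_ker; apply/mxrank_injP/rowV0P => w.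
by rewrite sub_capmx => /andP[/sub_kermxP wM0 /sub_kermxP wN0]; apply: kerM_inj.
Qed.

Lemma direct_sum_whole_rowspace {F : fieldType} {d : nat}
    {U V : 'cV[F]_d -> Prop} {P Q : 'M[F]_d} :
  (forall v, U v <-> (v^T <= P)%MS) -> (forall v, V v <-> (v^T <= Q)%MS) ->
  (P :&: Q)%MS = 0 -> (\rank P + \rank Q)%N = d -> direct_sum_whole U V.
Proof.
move=> UP VQ PQ0 rankPQ; split=> [v | v /UP vP /VQ vQ].
  have : row_full (P + Q)%MS by rewrite -col_leq_rank mxrank_disjoint_sum ?rankPQ.
  move/(submx_full v^T)/sub_addsmxP => [[x y] /= vxy].
  exists (x *m P)^T, (y *m Q)^T; split; first by apply/UP; rewrite trmxK submxMl.
  split; first by apply/VQ; rewrite trmxK submxMl.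
  by apply: trmx_inj; rewrite linearD /= !trmxK.
apply: trmx_inj; rewrite trmx0; apply/eqP; rewrite -submx0 -PQ0 sub_capmx.
by rewrite vP vQ.
Qed.

Theorem lemma3p4 (R : realFieldType) (d : nat) (S : 'M[R]_(d + d)) :
  symplectic S ->
  let A := ulsubmx S in
  let B := ursubmx S in
  direct_sum_whole (range_mx B) (image_mx A (ker_mx B)).
Proof.
move=> /symplectic_blocks [symAD symBD] A B.
have kerB_imageA_eq0 := symplectic_kerB_imageA_eq0 symAD symBD.
apply: (direct_sum_whole_rowspace (range_mx_rowE B) (image_ker_mx_rowE A B)).
  exact: capmx_kermx_mul_eq0.
rewrite mxrank_kermx_mul ?subnKC ?rank_leq_col // => u uB0 uA0.
by apply: (kerB_imageA_eq0 _ 0 uB0); rewrite uA0 mul0mx.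
Qed.
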